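(* Let $E$ be a finite set and $\tau:2^E\to 2^E$ any map. Then $(E,\tau)$ is uniquely generated if and only if for every $X\subseteq E$, every basis $B$ of $X$, and every $Y\subseteq E$ with $\tau(Y)=\tau(X)$, we have $B\subseteq Y$.
   Context: For $X\subseteq E$, a generator of $X$ is any $B\subseteq E$ with $\tau(B)=\tau(X)$ (not required to be a subset of $X$); a basis of $X$ is an inclusion-minimal generator of $X$. The space $(E,\tau)$ is uniquely generated if every $X\subseteq E$ has exactly one basis. *)

From mathcomp Require Import all_boot.
Set Implicit Arguments. Unset Strict Implicit. Unset Printing Implicit Defensive.

Definition generator (E : finType) (tau : {set E} -> {set E}) (X B : {set E}) : Prop :=
  tau B = tau X.

Definition basis (E : finType) (tau : {set E} -> {set E}) (X B : {set E}) : Prop :=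
  generator tau X B /\ forall C : {set E}, C \subset B -> generator tau X C -> C = B.

Definition uniquely_generated (E : finType) (tau : {set E} -> {set E}) : Prop :=
  forall X : {set E}, exists! B : {set E}, basis tau X B.

From mathcomp Require Import all_boot.

(* If Y generates X, a generator of X inside Y of minimal cardinality is a
   basis of X, and the bases of X are exactly those of Y.  Under unique
   generation, any basis of X is therefore the basis of Y found inside Y.
   Conversely, two bases of X generate X, so each lies inside the other. *)

Section Bases.

Context {E : finType} {tau : {set E} -> {set E}}.

Lemma basis_tau_eq (X Y B : {set E}) :
  tau X = tau Y -> basis tau X B <-> basis tau Y B.
Proof. by rewrite /basis /generator => ->. Qed.

Lemma exists_basis_subset (X Y : {set E}) :
  tau Y = tau X -> exists2 B, basis tau X B & B \subset Y.
Proof.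
move=> genY.
pose gen_in_Y (C : {set E}) := (C \subset Y) && (tau C == tau X).
have gen_in_YY : gen_in_Y Y by rewrite /gen_in_Y subxx genY eqxx.
have [B /andP [sBY /eqP genB] minB] := arg_minnP (fun C : {set E} => #|C|) gen_in_YY.
exists B => //; split=> // C sCB genC.
apply/eqP; rewrite eqEcard sCB minB //.
by rewrite /gen_in_Y (subset_trans sCB sBY) genC /=.
Qed.

End Bases.

Theorem mainTheorem6 (E : finType) (tau : {set E} -> {set E}) :
  uniquely_generated tau <->
  (forall X B Y : {set E}, basis tau X B -> tau Y = tau X -> B \subset Y).
Proof.
split=> [uniq_basis X B Y basisB genY | bases_in_generators X].
- have [B' basisB' sB'Y] := exists_basis_subset _ _ genY.
  have [B0 [_ eq_B0]] := uniq_basis Y.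
  have toY C : basis tau X C -> basis tau Y C by move/(basis_tau_eq _ _ C (esym genY)).
  by rewrite -(eq_B0 _ (toY _ basisB)) (eq_B0 _ (toY _ basisB')).
- have [B basisB _] := exists_basis_subset _ _ (erefl (tau X)).
  exists B; split=> // B' basisB'.
  apply/eqP; rewrite eqEsubset.
  by rewrite (bases_in_generators _ _ _ basisB (proj1 basisB'))
             (bases_in_generators _ _ _ basisB' (proj1 basisB)).
Qed.
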